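(* Let $n,a,b\in\mathbb{Z}$ with $n\ge 1$ and $ab\ne 0$, and let $\mathcal{F}_{n,a,b}(x)=x^{2n}+ax^n+b$. Suppose that $\mathcal{F}_{n,a,b}(x)$ is irreducible over $\mathbb{Q}$ and that its Galois group over $\mathbb{Q}$ is abelian. Then $n=2^r3^s$ for some nonnegative integers $r$ and $s$. Furthermore, for every divisor $d\ge 1$ of $n$, the Galois group of $\mathcal{F}_{d,a,b}(x)=x^{2d}+ax^d+b$ over $\mathbb{Q}$ is abelian. *)

From HB Require Import structures.
From mathcomp Require Import all_boot all_order all_algebra all_fingroup all_solvable all_field.
Set Implicit Arguments. Unset Strict Implicit. Unset Printing Implicit Defensive.
Import GRing.Theory.
Local Open Scope ring_scope.

Definition Fnab (n : nat) (a b : int) : {poly rat} :=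
  'X^(2 * n) + (a%:~R)%:P * 'X^n + (b%:~R)%:P.

(* Splitting fields are unique up to isomorphism, so this does not depend on
   the choice of L and E. *)
Definition gal_abelian (p : {poly rat}) : Prop :=
  forall (L : splittingFieldType rat) (E : {subfield L}),
    splittingFieldFor 1%VS (map_poly (in_alg L) p) E ->
    abelian 'Gal(E / 1%VS)%g.

(* Automorphisms of algC permute the roots of F = F_{n,a,b}; they do so
   transitively when F is irreducible and, when its Galois group is abelian,
   any two of them commute on the roots.  Fix a root x and a primitive n-th
   root of unity z, and describe an automorphism s by s x = z^j x and
   s z = z^c.  Commuting with an s0 sending x to z x forces
   c = 1 + (c0 - 1) j (mod n); as j is arbitrary and c is prime to every
   prime p | n, this gives c0 = 1 and then c = 1 (mod p).  For an odd p the
   square of an automorphism z |-> z^u with u = 2 (mod p) fixes the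
   quadratic irrationality x^n, hence maps x to some z^j x, so 4 = 1 (mod p)
   and p = 3.  For d | n the roots of F_{d,a,b} are (n/d)-th powers of roots
   of F, so automorphisms still commute on them, and this commutation is
   enough to make the Galois group of F_{d,a,b} abelian. *)

From HB Require Import structures.
From mathcomp Require Import all_boot all_order all_algebra all_fingroup all_solvable all_field.
From mathcomp Require Import ring.
Set Implicit Arguments. Unset Strict Implicit. Unset Printing Implicit Defensive.
Import GRing.Theory Num.Theory.

Lemma expn23_of_prime_divisors_le3 (n : nat) : 0 < n ->
  (forall p, prime p -> p %| n -> p <= 3) ->
  exists r s : nat, n = (2 ^ r * 3 ^ s)%N.
Proof.
move=> n_gt0 le3; exists (logn 2 n), (logn 3 n`_2^'); rewrite -!p_part.
suff /part_pnat_id -> : 3.-nat n`_2^' by rewrite partnC.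
apply/pnatP => [|q q_prime q_dvd]; first exact: part_gt0.
have /pnatPpi/(_ _) : 2^'.-nat n`_2^' := part_pnat _ n.
move=> /(_ q); rewrite mem_primes q_prime part_gt0 q_dvd => /(_ isT).
have := le3 q q_prime (dvdn_trans q_dvd (dvdn_part _ n)).
by case: q q_prime {q_dvd} => [|[|[|[|]]]].
Qed.

Lemma coprime_lift_mod_prime (n p k : nat) : 0 < n -> prime p -> p %| n ->
  coprime k p -> exists2 u, coprime u n & u = k %[mod p].
Proof.
move=> n_gt0 p_prime p_dvd_n k_coprime.
have [m p_coprime_m Dn] := pfactor_coprime p_prime n_gt0.
set q := (p ^ logn p n)%N in Dn.
have p_dvd_q : p %| q.
  by rewrite dvdn_exp // logn_gt0 mem_primes p_prime n_gt0 p_dvd_n.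
have q_coprime_m : coprime q m by apply: coprimeXl.
exists (chinese q m k 1); last first.
  by rewrite -(modn_dvdm (chinese _ _ _ _) p_dvd_q) chinese_modl // modn_dvdm.
rewrite Dn coprimeMr -coprime_modl chinese_modr // coprime_modl coprime1n /=.
by rewrite -coprime_modl chinese_modl // coprime_modl coprimeXr // coprime_sym.
Qed.

Local Open Scope ring_scope.

Lemma eq_prim_root_expr_Fp (R : nzRingType) (n p : nat) (z : R) (i j : nat) :
  prime p -> (p %| n)%N -> n.-primitive_root z -> z ^+ i = z ^+ j ->
  i%:R = j%:R :> 'F_p.
Proof.
move=> p_prime p_dvd_n z_prim /eqP; rewrite (eq_prim_root_expr z_prim) => /eqP ij.
by apply: val_inj; rewrite /= !val_Fp_nat // -(modn_dvdm i p_dvd_n) ij modn_dvdm.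
Qed.

Lemma aut_prim_root_expr (F : fieldType) (nu : {rmorphism F -> F}) (n : nat)
    (z : F) :
  n.-primitive_root z -> exists2 c, coprime c n & nu z = z ^+ c.
Proof.
move=> z_prim; have nuz_prim : n.-primitive_root (nu z).
  by rewrite fmorph_primitive_root.
have [c Dc] := prim_rootP z_prim (prim_expr_order nuz_prim).
by exists c; rewrite // -(prim_root_exp_coprime _ z_prim) -Dc.
Qed.

Lemma prim_root_eq_expr_mul (F : fieldType) (n : nat) (z x y : F) :
  n.-primitive_root z -> x != 0 -> y ^+ n = x ^+ n -> exists j, y = z ^+ j * x.
Proof.
move=> z_prim x_neq0 yx; have xn_neq0 : x ^+ n != 0 by rewrite expf_neq0.
have yx_unity : (y / x) ^+ n = 1 by rewrite expr_div_n yx divff.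
have [j Dj] := prim_rootP z_prim yx_unity.
by exists j; rewrite -Dj divfK.
Qed.

Lemma aut_sqr_fix_quadratic_root (R : idomainType) (nu : {rmorphism R -> R})
    (a b x : R) :
  nu a = a -> nu b = b -> x ^+ 2 + a * x + b = 0 -> nu (nu x) = x.
Proof.
move=> nu_a nu_b x_root; have nux_root : nu x ^+ 2 + a * nu x + b = 0.
  by rewrite -nu_a -nu_b -rmorphXn -rmorphM -!rmorphD x_root rmorph0.
have [nux_x | nux_neq_x] := eqVneq (nu x) x; first by rewrite !nux_x.
have Dnux : nu x = - a - x.
  have : (nu x - x) * (nu x + x + a) = 0.
    by rewrite -[RHS](subrr 0) -{1}nux_root -{1}x_root; ring.
  move/eqP; rewrite mulf_eq0 subr_eq0 (negbTE nux_neq_x) => /eqP sum_roots.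
  by apply/eqP; rewrite -subr_eq0 -sum_roots; apply/eqP; ring.
by rewrite {1}Dnux rmorphB rmorphN nu_a Dnux; ring.
Qed.

Definition roots_aut_commute (p : {poly rat}) : Prop :=
  forall (nu1 nu2 : {rmorphism algC -> algC}) (x : algC),
    root (map_poly ratr p) x -> nu1 (nu2 x) = nu2 (nu1 x).

Definition roots_aut_transitive (p : {poly rat}) : Prop :=
  forall x y : algC, root (map_poly ratr p) x -> root (map_poly ratr p) y ->
    exists nu : {rmorphism algC -> algC}, nu x = y.

Lemma map_poly_in_alg_ratr (L : fieldExtType rat) (f : {rmorphism L -> algC})
    (p : {poly rat}) :
  map_poly f (map_poly (in_alg L) p) = map_poly ratr p.
Proof.
rewrite -map_poly_comp; apply: eq_map_poly => c.
by rewrite /= rmorphZ_num rmorph1 mulr1.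
Qed.

Lemma algC_splitting_field (p : {poly rat}) : p != 0 ->
  {L : splittingFieldType rat & {LC : {rmorphism L -> algC} |
    splittingFieldFor 1 (map_poly (in_alg L) p) fullv &
    forall x, root (map_poly ratr p) x -> exists y, LC y = x}}.
Proof.
move=> p_neq0; have pC_neq0 : map_poly (ratr : rat -> algC) p != 0.
  by rewrite map_poly_eq0.
have [r Dp] := closed_field_poly_normal (map_poly (ratr : rat -> algC) p).
have [L0 [LC [s Ds genL]]] := num_field_exists r.
have splitL : splittingFieldFor 1 (map_poly (in_alg L0) p) fullv.
  exists s => //; rewrite -(eqp_map LC) map_poly_in_alg_ratr {1}Dp.
  rewrite rmorph_prod -Ds big_map (eq_bigr _ (fun y _ => map_polyXsubC LC y)).
  by rewrite eqp_scale ?lead_coef_eq0.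
have splitAx : splitting_field_axiom L0.
  by exists (map_poly (in_alg L0) p); first by apply/polyOver1P; exists p.
pose L : splittingFieldType rat :=
  HB.pack L0 (FieldExt_isSplittingField.Build _ L0 splitAx).
exists L, LC => // x; rewrite Dp rootZ ?lead_coef_eq0 // root_prod_XsubC -Ds.
by case/mapP => y _ ->; exists y.
Qed.

Lemma fieldExt_primitive_element (L : fieldExtType rat) :
  exists g : L, <<1; g>>%VS = fullv.
Proof.
have charL0 : has_pchar0 L by move=> x; rewrite pchar_lalg pchar_num.
suff [g Dg] : exists g : L, <<1 & vbasis fullv>>%VS = <<1; g>>%VS.
  exists g; rewrite -Dg; apply/eqP; rewrite eqEsubv subvf /=.
  rewrite -{1}(span_basis (vbasisP fullv)).
  by apply/span_subvP => x /seqv_sub_adjoin.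
elim/last_ind: (vbasis _ : seq L) => [|s x [g Dg]].
  by exists 0; rewrite Fadjoin_nil Fadjoin0.
have [y Dy] := Primitive_Element_Theorem x (pcharf0_separable 1%AS charL0 g).
by exists y; rewrite adjoin_rcons Dg.
Qed.

Lemma fieldExt_algC_embedding (L : fieldExtType rat) :
  inhabited {rmorphism L -> algC}.
Proof.
have [g Dg] := fieldExt_primitive_element L.
have [q Dq] := polyOver1P (minPolyOver 1 g).
have [w qw0] : exists w : algC, root (map_poly ratr q) w.
  apply/closed_rootP; rewrite size_map_poly.
  by have := size_minPoly 1 g; rewrite Dq size_map_poly => ->.
pose toQ := coord [tuple (1 : L)] ord0.
have toQK : cancel (in_alg L) toQ.
  move=> c; have := @coord_free _ _ _ [tuple (1 : L)] ord0 ord0.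
  by rewrite seq1_free oner_eq0 /toQ linearZ /= => ->; rewrite ?mulr1.
pose Q x := map_poly toQ (Fadjoin_poly 1 g x).
have DQ x : map_poly (in_alg L) (Q x) = Fadjoin_poly 1 g x.
  rewrite /Q; have [r ->] := polyOver1P (Fadjoin_polyOver 1 g x).
  by rewrite -[map_poly toQ _]map_poly_comp /comp (eq_map_poly toQK) map_poly_id.
have Q_inj : injective (map_poly (in_alg L)) := map_poly_inj (in_alg L).
(* Since x = (Q x).[g], this maps g to its conjugate w. *)
pose phi x := (map_poly ratr (Q x)).[w].
have phiB : zmod_morphism phi.
  move=> x y; rewrite /phi -hornerN -hornerD -rmorphB; congr (map_poly _ _).[w].
  by apply: Q_inj; rewrite rmorphB /= !DQ raddfB.
have phiM : monoid_morphism phi.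
  split=> [|x y]; rewrite /phi.
    have -> : Q 1 = 1 by apply: Q_inj; rewrite DQ rmorph1 Fadjoin_polyC ?mem1v.
    by rewrite rmorph1 hornerC.
  have -> : Q (x * y) = (Q x * Q y) %% q.
    apply: Q_inj; rewrite map_modp rmorphM /= !DQ -Dq.
    rewrite -Fadjoin_poly_mod ?rpredM ?Fadjoin_polyOver //.
    by rewrite hornerM !Fadjoin_poly_eq // Dg memvf.
  by rewrite map_modp horner_mod // rmorphM hornerM.
pose phiA := GRing.isZmodMorphism.Build _ _ phi phiB.
pose phiR := GRing.isMonoidMorphism.Build _ _ phi phiM.
exact: inhabits (HB.pack phi phiA phiR : {rmorphism L -> algC}).
Qed.

Lemma gal_abelian_roots_aut_commute (p : {poly rat}) :
  p != 0 -> gal_abelian p -> roots_aut_commute p.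
Proof.
move=> p_neq0 abelian_p nu1 nu2 x px0.
have [L [LC splitL LC_onto]] := algC_splitting_field p_neq0.
have [y <-] := LC_onto x px0.
have [f1 Df1] := restrict_aut_to_normal_num_field LC nu1.
have [f2 Df2] := restrict_aut_to_normal_num_field LC nu2.
have kAut_f (f : {lrmorphism L -> L}) : kAut 1 fullv (linfun f).
  rewrite kAutfE; apply/kHom_monoid_morphism.
  by split=> [|u v]; rewrite !lfunE /= ?rmorph1 ?rmorphM.
have [g1 Gg1 Dg1] := kAut_to_gal (kAut_f f1).
have [g2 Gg2 Dg2] := kAut_to_gal (kAut_f f2).
have g12 : commute g1 g2 := centsP (abelian_p L fullv splitL) g1 Gg1 g2 Gg2.
have f12 : f1 (f2 y) = f2 (f1 y).
  have := congr1 (fun g : gal_of _ => g y) g12.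
  by rewrite /= !galM ?memvf // -!Dg1 ?memvf // -!Dg2 ?memvf // !lfunE.
by rewrite -Df1 -Df2 -Df1 -Df2 f12.
Qed.

Lemma gal_eq_adjoin_seq (F : fieldType) (L : splittingFieldType F)
    (E : {subfield L}) (rs : seq L) (g1 g2 : gal_of E) :
  <<1 & rs>>%VS = E -> {in rs, g1 =1 g2} -> g1 = g2.
Proof.
move=> DE g12; apply/eqP; rewrite eq_mulgV1; set h := (g1 * g2^-1)%g.
have Efix : (E <= fixedField [set h])%VS.
  rewrite -{1}DE; apply/Fadjoin_seqP; split=> [|r rs_r]; first exact: sub1v.
  have Er : r \in E by rewrite -DE seqv_sub_adjoin.
  apply/fixedFieldP => // _ /set1P ->.
  by rewrite galM // g12 // -galM ?memv_gal // mulgV gal_id.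
apply/gal_eqP => x Ex; rewrite gal_id.
by have /fixedFieldP-> := subvP Efix x Ex; rewrite ?inE.
Qed.

Lemma gal_extend_algC_aut (L : splittingFieldType rat)
    (LC : {rmorphism L -> algC}) (E : {subfield L}) (g : gal_of E) :
  g \in 'Gal(E / 1%VS)%g ->
  exists nu : {rmorphism algC -> algC}, {in E, forall x, LC (g x) = nu (LC x)}.
Proof.
move=> Gg; have homEg : kHom 1 E (gal_repr g) by rewrite -gal_kHom ?sub1v.
have subE : (1%AS <= E <= fullv)%VS by rewrite sub1v subvf.
have [g' _ Dg'] := kHom_to_gal subE (normalFieldf 1) homEg.
have [nu Dnu] := extend_algC_subfield_aut LC (gal_repr g').
by exists nu => x Ex; rewrite -Dnu; congr (LC _); apply: Dg'.
Qed.

Lemma roots_aut_commute_gal_abelian (p : {poly rat}) :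
  roots_aut_commute p -> gal_abelian p.
Proof.
move=> commute_p L E [rs Drs DE]; have [LC] := fieldExt_algC_embedding L.
apply/centsP => g1 Gg1 g2 Gg2.
have [nu1 Dnu1] := gal_extend_algC_aut LC Gg1.
have [nu2 Dnu2] := gal_extend_algC_aut LC Gg2.
apply: (gal_eq_adjoin_seq DE) => r rs_r.
have Er : r \in E by rewrite -DE seqv_sub_adjoin.
have pr0 : root (map_poly ratr p) (LC r).
  rewrite -(map_poly_in_alg_ratr LC) fmorph_root (eqp_root Drs).
  by rewrite root_prod_XsubC.
apply: (fmorph_inj LC).
by rewrite !galM // Dnu2 ?memv_gal // Dnu1 // Dnu1 ?memv_gal // Dnu2 // commute_p.
Qed.

Lemma irreducible_roots_aut_transitive (p : {poly rat}) :
  irreducible_poly p -> roots_aut_transitive p.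
Proof.
move=> irr_p x y px0 py0; have p_neq0 : p != 0 by apply: irredp_neq0.
have [L [LC splitL LC_onto]] := algC_splitting_field p_neq0.
have [u Du] := LC_onto x px0; have [v Dv] := LC_onto y py0.
have pL_root w : root (map_poly ratr p) (LC w) -> root (map_poly (in_alg L) p) w.
  by rewrite -(map_poly_in_alg_ratr LC) fmorph_root.
have [q Dq] := polyOver1P (minPolyOver 1 u).
have q_dvd_p : q %| p.
  rewrite -(dvdp_map (in_alg L)) -Dq minPoly_dvdp ?pL_root ?Du //.
  by apply/polyOver1P; exists p.
have q_eqp_p : q %= p.
  apply: (irr_p.2 q _ q_dvd_p).
  by have := size_minPoly 1 u; rewrite Dq size_map_poly => ->.
have uv_conj : root (minPoly 1 u) v.
  have qL_eqp_pL : map_poly (in_alg L) q %= map_poly (in_alg L) p.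
    by rewrite eqp_map.
  by rewrite Dq (eqp_root qL_eqp_pL) pL_root ?Dv.
have [g _ Dg] :=
  normalField_root_minPoly (sub1v fullv) (normalFieldf 1) (memvf u) uv_conj.
have [nu Dnu] := extend_algC_subfield_aut LC (gal_repr g).
by exists nu; rewrite -Du -Dv -Dnu; exact: (congr1 LC Dg).
Qed.

Lemma root_Fnab (n : nat) (a b : int) (x : algC) :
  root (map_poly ratr (Fnab n a b)) x =
    ((x ^+ n) ^+ 2 + a%:~R * x ^+ n + b%:~R == 0).
Proof.
rewrite /Fnab !rmorphD rmorphM /= !map_polyXn !map_polyC /= !ratr_int.
by rewrite rootE !hornerE mulnC exprM.
Qed.

Lemma root_Fnab_neq0 (n : nat) (a b : int) (x : algC) :
  (0 < n)%N -> b != 0 ->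
  root (map_poly ratr (Fnab n a b)) x -> x != 0.
Proof.
move=> n_gt0 b_neq0; apply: contraTneq => ->.
by rewrite root_Fnab expr0n eqn0Ngt n_gt0 /= expr0n mulr0 !add0r intr_eq0.
Qed.

Lemma root_Fnab_eq_expr (n : nat) (a b : int) (x y : algC) :
  y ^+ n = x ^+ n ->
  root (map_poly ratr (Fnab n a b)) x -> root (map_poly ratr (Fnab n a b)) y.
Proof. by move=> yx; rewrite !root_Fnab yx. Qed.

Lemma roots_aut_commute_Fnab_dvd (n d : nat) (a b : int) :
  (0 < n)%N -> (d %| n)%N ->
  roots_aut_commute (Fnab n a b) -> roots_aut_commute (Fnab d a b).
Proof.
move=> n_gt0 d_dvd_n commute_n nu1 nu2 x Fd_x; set k := (n %/ d)%N.
have k_gt0 : (0 < k)%N by rewrite divn_gt0 ?(dvdn_gt0 n_gt0 d_dvd_n) // dvdn_leq.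
have [y /rootP] : exists y, root ('X^k - x%:P) y.
  by apply/closed_rootP; rewrite size_XnsubC // eqSS -lt0n.
rewrite !hornerE => /eqP; rewrite subr_eq0 => /eqP Dx.
have Fn_y : root (map_poly ratr (Fnab n a b)) y.
  by rewrite root_Fnab -(divnK d_dvd_n) exprM -/k Dx -root_Fnab.
by rewrite -Dx !rmorphXn commute_n.
Qed.

Section FnabPrimeDivisor.

Variables (n : nat) (a b : int) (p : nat) (z x : algC).
Hypotheses (p_prime : prime p) (p_dvd_n : (p %| n)%N).
Hypotheses (z_prim : n.-primitive_root z) (x_neq0 : x != 0).
Hypotheses (Fx : root (map_poly ratr (Fnab n a b)) x).
Hypotheses (commuteF : roots_aut_commute (Fnab n a b)).
Hypotheses (transF : roots_aut_transitive (Fnab n a b)).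

Lemma root_Fnab_mul_prim_expr j : root (map_poly ratr (Fnab n a b)) (z ^+ j * x).
Proof.
apply: root_Fnab_eq_expr Fx.
by rewrite exprMn exprAC (prim_expr_order z_prim) expr1n mul1r.
Qed.

Lemma aut_exponents_commute (s t : {rmorphism algC -> algC}) (i j c d : nat) :
  s x = z ^+ i * x -> t x = z ^+ j * x -> s z = z ^+ c -> t z = z ^+ d ->
  (c * j + i)%:R = (d * i + j)%:R :> 'F_p.
Proof.
move=> Dsx Dtx Dsz Dtz; apply: (eq_prim_root_expr_Fp p_prime p_dvd_n z_prim).
apply: (mulIf x_neq0); rewrite !exprD !exprM -!mulrA.
have := commuteF s t Fx; rewrite Dsx Dtx !rmorphM !rmorphXn Dsx Dtx Dsz Dtz.
by rewrite -!exprM.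
Qed.

Lemma aut_exponent_eq1_Fp (s : {rmorphism algC -> algC}) (j c : nat) :
  s x = z ^+ j * x -> s z = z ^+ c -> c%:R = 1 :> 'F_p.
Proof.
have [s0 Ds0x] := transF Fx (root_Fnab_mul_prim_expr 1).
have [c0 _ Ds0z] := aut_prim_root_expr s0 z_prim.
have exponentE (t : {rmorphism algC -> algC}) k d :
    t x = z ^+ k * x -> t z = z ^+ d -> d%:R = (c0%:R - 1) * k%:R + 1 :> 'F_p.
  move=> Dtx Dtz; have := aut_exponents_commute Ds0x Dtx Ds0z Dtz.
  rewrite !natrD !natrM mulr1 => exponents_rel.
  by apply: (addIr (k%:R : 'F_p)); rewrite -exponents_rel; ring.
suff c0_eq1 : c0%:R = 1 :> 'F_p.
  by move=> /exponentE E /E ->; rewrite c0_eq1 subrr mul0r add0r.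
have [// | c0_neq1] := eqVneq (c0%:R : 'F_p) 1.
(* This k would make d divisible by p, although t z is a primitive root. *)
pose k : 'F_p := - (c0%:R - 1)^-1.
have [t Dtx] := transF Fx (root_Fnab_mul_prim_expr k).
have [d d_coprime Dtz] := aut_prim_root_expr t z_prim.
have := exponentE t k d Dtx Dtz.
rewrite natr_Zp /k mulrN mulfV ?subr_eq0 // addNr => /eqP.
rewrite -(dvdn_pcharf (pchar_Fp p_prime)) => p_dvd_d.
have := coprime_dvdr p_dvd_n d_coprime.
by rewrite coprime_sym prime_coprime // p_dvd_d.
Qed.

Lemma Fnab_odd_prime_divisor_eq3 : p != 2 -> p = 3.
Proof.
move=> p_neq2; have two_coprime_p : coprime 2 p.
  by rewrite coprime_sym prime_coprime // dvdn_prime2.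
have [u u_coprime u_mod] :=
  coprime_lift_mod_prime (prim_order_gt0 z_prim) p_prime p_dvd_n two_coprime_p.
have [nu Dnu] := Qn_aut_exists u_coprime.
pose tau : {rmorphism algC -> algC} := nu \o nu.
have tau_z : tau z = z ^+ (u * u).
  have nu_z : nu z = z ^+ u by apply: Dnu; apply: prim_expr_order.
  by rewrite /tau /= nu_z rmorphXn nu_z -exprM.
have tau_xn : tau (x ^+ n) = x ^+ n.
  apply: (@aut_sqr_fix_quadratic_root _ _ a%:~R b%:~R); rewrite ?rmorph_int //.
  by apply/eqP; rewrite -root_Fnab.
have [j Dj] : exists j, tau x = z ^+ j * x.
  by apply: prim_root_eq_expr_mul z_prim x_neq0 _; rewrite -rmorphXn.
have := aut_exponent_eq1_Fp Dj tau_z.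
have u_Fp : u%:R = 2%:R :> 'F_p by rewrite -(Fp_nat_mod p_prime) u_mod Fp_nat_mod.
rewrite natrM u_Fp => four_eq1.
have : (2%:R * 2%:R - 1 : 'F_p) = 3%:R by ring.
rewrite four_eq1 subrr => /esym/eqP.
by rewrite -(dvdn_pcharf (pchar_Fp p_prime)) dvdn_prime2 => // /eqP.
Qed.

End FnabPrimeDivisor.

Lemma Fnab_prime_divisor_le3 (n : nat) (a b : int) :
  (0 < n)%N -> b != 0 ->
  irreducible_poly (Fnab n a b) -> roots_aut_commute (Fnab n a b) ->
  forall p, prime p -> (p %| n)%N -> (p <= 3)%N.
Proof.
move=> n_gt0 b_neq0 irrF commuteF p p_prime p_dvd_n.
have [-> // | p_neq2] := eqVneq p 2.
have [z z_prim] := C_prim_root_exists n_gt0.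
have [x Fx] : exists x : algC, root (map_poly ratr (Fnab n a b)) x.
  by apply/closed_rootP; rewrite size_map_poly gtn_eqF //; case: irrF.
have x_neq0 := root_Fnab_neq0 n_gt0 b_neq0 Fx.
have transF := irreducible_roots_aut_transitive irrF.
by rewrite (Fnab_odd_prime_divisor_eq3 p_prime p_dvd_n z_prim x_neq0 Fx commuteF
  transF).
Qed.

Theorem lemma2p1 (n : nat) (a b : int) :
  (1 <= n)%N -> a * b != 0 ->
  irreducible_poly (Fnab n a b) -> gal_abelian (Fnab n a b) ->
  (exists r s : nat, n = (2 ^ r * 3 ^ s)%N) /\
  (forall d : nat, (1 <= d)%N -> (d %| n)%N -> gal_abelian (Fnab d a b)).
Proof.
move=> n_gt0 ab_neq0 irrF abelianF.
have commuteF := gal_abelian_roots_aut_commute (irredp_neq0 irrF) abelianF.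
have b_neq0 : b != 0 by apply: contraNneq ab_neq0 => ->; rewrite mulr0.
split.
  exact: expn23_of_prime_divisors_le3 n_gt0
    (Fnab_prime_divisor_le3 n_gt0 b_neq0 irrF commuteF).
move=> d _ d_dvd_n; apply: roots_aut_commute_gal_abelian.
exact: roots_aut_commute_Fnab_dvd n_gt0 d_dvd_n commuteF.
Qed.
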